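(* Let $n\ge 2$ be an integer and let $A$ be an uncountable compact subset of $(L_n,\tau_E|_{L_n})$. Then $(X_n,\tau(A))$ is perfect but not Lindelöf, and likewise $(X_n,\tau(L_n\setminus A))$ is perfect but not Lindelöf.
   Context: For $\overline{x},\overline{a}\in\mathbb R^n$ let $|\overline{x}-\overline{a}|$ be the Euclidean distance and $B(\overline{a},\epsilon)=\{\overline{x}\in\mathbb R^n:|\overline{x}-\overline{a}|<\epsilon\}$. Let $P_n=\{\overline{x}\in\mathbb R^n: x_n>0\}$, $L_n=\{\overline{x}\in\mathbb R^n: x_n=0\}$, $X_n=P_n\cup L_n$, and let $\tau_E$ denote the Euclidean topology on $X_n$. For $\overline{a}\in L_n$ and $\epsilon>0$ put $\overline{a(\epsilon)}=(a_1,\dots,a_{n-1},\epsilon)$ and $\tilde B(\overline{a},\epsilon)=\{\overline{a}\}\cup B(\overline{a(\epsilon)},\epsilon)$. For $A\subseteq L_n$, the topology $\tau(A)$ on $X_n$ is generated by the local bases: at $\overline{a}\in P_n$, the sets $B(\overline{a},\epsilon)$ with $0<\epsilon<a_n$; at $\overline{a}\in A$, the sets $B(\overline{a},\epsilon)\cap X_n$ with $\epsilon>0$; at $\overline{a}\in L_n\setminus A$, the sets $\tilde B(\overline{a},\epsilon)$ with $\epsilon>0$. A space is perfect if every closed set is a $G_\delta$-set. *)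

From HB Require Import structures.
From mathcomp Require Import all_boot all_order all_algebra.
From mathcomp Require Import all_classical all_reals all_analysis.
Set Implicit Arguments. Unset Strict Implicit. Unset Printing Implicit Defensive.
Import Order.TTheory GRing.Theory Num.Theory.
Import numFieldNormedType.Exports.
Local Open Scope classical_set_scope.
Local Open Scope ring_scope.

Section Space.
Variables (R : realType) (n : nat).
Notation pt := 'rV[R]_n.

(* k-th coordinate (0-based, as a nat index); 0 if out of range *)
Definition coord (x : pt) (k : nat) : R :=
  match @insub _ (fun i => i < n)%N 'I_n k with Some i => x ord0 i | None => 0 end.

Definition lastc (x : pt) : R := coord x n.-1.

Definition edist (x a : pt) : R := Num.sqrt (\sum_(i < n) (x ord0 i - a ord0 i) ^+ 2).
Definition eball (a : pt) (e : R) : set pt := [set x | edist x a < e].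

Definition Pn : set pt := [set x | 0 < lastc x].
Definition Ln : set pt := [set x | lastc x = 0].
Definition Xn : set pt := Pn `|` Ln.

Definition lift_pt (a : pt) (e : R) : pt :=
  \row_(i < n) (if (i : nat) == n.-1 then e else a ord0 i).

Definition tball (a : pt) (e : R) : set pt := [set a] `|` eball (lift_pt a e) e.

Definition tau_base (A : set pt) (x : pt) : set (set pt) :=
  [set B | (Pn x /\ exists e, 0 < e < lastc x /\ B = eball x e)
        \/ (A x /\ exists e, 0 < e /\ B = eball x e `&` Xn)
        \/ ((Ln `\` A) x /\ exists e, 0 < e /\ B = tball x e)].

Definition tau_open (A : set pt) (U : set pt) : Prop :=
  U `<=` Xn /\ forall x, U x -> exists2 B, tau_base A x B & B `<=` U.

Definition tau_closed (A : set pt) (F : set pt) : Prop :=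
  F `<=` Xn /\ tau_open A (Xn `\` F).

Definition tau_Gdelta (A : set pt) (F : set pt) : Prop :=
  exists U : nat -> set pt, (forall k, tau_open A (U k)) /\ F = \bigcap_k U k.

Definition tau_perfect (A : set pt) : Prop :=
  forall F, tau_closed A F -> tau_Gdelta A F.

Definition tau_Lindelof (A : set pt) : Prop :=
  forall C : set (set pt), (forall U, C U -> tau_open A U) -> Xn `<=` \bigcup_(U in C) U ->
    exists2 D : set (set pt), D `<=` C /\ countable D & Xn `<=` \bigcup_(U in D) U.

End Space.

(* The topology τ(B) refines the Euclidean one, and its only new neighbourhoods are the
   tangent discs at the points of L_n \ B, which meet L_n in a single point.
   Perfectness: if B = L_n ∩ ⋂_k W_k with each W_k Euclidean open, a closed F is the
   intersection over k of the open sets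
     (F thickened by 1/(k+1)) ∩ (P_n ∪ W_k)  ∪  F ∩ (L_n \ B)  ∪  {x ∈ P_n | x_n < 1/(k+1)};
   this applies to B = A, a compact hence Euclidean G_δ set, and to B = L_n \ A.
   Non-Lindelöfness: if S ⊆ L_n \ B is Euclidean closed, the open sets (X_n \ S) ∪ {s},
   s ∈ S, cover X_n and each meets S in one point, so S must be countable.  Take S = A
   for B = L_n \ A, and for B = A a translate of A along L_n far enough to miss A. *)
From Pilot Require Import Defs.
From HB Require Import structures.
From mathcomp Require Import all_boot all_order all_algebra.
From mathcomp Require Import all_classical all_reals all_analysis.
From mathcomp Require Import borel_hierarchy ring lra.
Import Order.TTheory GRing.Theory Num.Theory.
Import numFieldNormedType.Exports.
Local Open Scope classical_set_scope.
Local Open Scope ring_scope.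
Set Implicit Arguments. Unset Strict Implicit. Unset Printing Implicit Defensive.

Section Thickening.
Context {R : realType} {V : pseudoMetricNormedZmodType R}.
Implicit Types (F : set V) (x : V).

Definition thicken F (k : nat) : set V := \bigcup_(y in F) ball y k.+1%:R^-1.

Lemma open_thicken F k : open (thicken F k).
Proof. by apply: bigcup_open => y _; exact: ball_open. Qed.

Lemma sub_thicken F k : F `<=` thicken F k.
Proof. by move=> x Fx; exists x => //; apply: ballxx; rewrite invr_gt0. Qed.

Lemma closure_thicken F x : (\forall k \near \oo, thicken F k x) -> closure F x.
Proof.
rewrite closureEnbhs => Fx A N FA /nbhs_ballP[e e0 xeN].
have [k [ke [y Fy yx]]] : exists k, k.+1%:R^-1 < e /\ thicken F k x.
  exact: filter_ex (filterI (near_infty_natSinv_lt (PosNum e0)) Fx).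
exists y; split; first exact: FA.
by apply/xeN/ball_sym; apply: le_ball yx; exact: ltW.
Qed.

Lemma closed_Gdelta F : closed F -> Gdelta F.
Proof.
move=> cF; exists (thicken F); first exact: open_thicken.
apply/seteqP; split=> [x Fx k _|x Fx]; first exact: sub_thicken.
rewrite ((closure_id F).1 cF); apply: closure_thicken.
by apply: nearW => k; exact: Fx.
Qed.

End Thickening.

Lemma translate_disjoint (K : numDomainType) (V : normedZmodType K) (A : set V) (v : V) M :
  (forall a, A a -> `|a| <= M) -> M *+ 2 < `|v| -> [set a + v | a in A] `&` A = set0.
Proof.
move=> AM vM; apply/seteqP; split=> // _ [[a Aa <-] Aav].
suff : `|v| <= M *+ 2 by move/(lt_le_trans vM); rewrite ltxx.
rewrite -[v](addKr a) mulr2n; apply: le_trans (ler_normD _ _) _.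
by rewrite normrN; exact: lerD (AM _ Aa) (AM _ Aav).
Qed.

Section TauTopology.
Variables (R : realType) (n : nat).
Hypothesis n_gt0 : (0 < n)%N.
Implicit Types (x y z t : 'rV[R]_n) (e r : R) (B F S U : set 'rV[R]_n).

Local Notation Pn := (@Pn R n).
Local Notation Ln := (@Ln R n).
Local Notation Xn := (@Xn R n).

Let ilast : 'I_n := Ordinal (etrans (ltn_predL n) n_gt0).

Lemma lastcE x : lastc x = x ord0 ilast.
Proof.
rewrite /lastc /Defs.coord; case: (@insubP _ (fun i : nat => i < n)%N 'I_n n.-1) => [i _ i_last|].
  by have -> : i = ilast by exact: val_inj.
by rewrite ltn_predL n_gt0.
Qed.

Lemma lastcD x y : lastc (x + y) = lastc x + lastc y.
Proof. by rewrite !lastcE mxE. Qed.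

Lemma lastc_lift_pt x e : lastc (lift_pt x e) = e.
Proof. by rewrite lastcE mxE eqxx. Qed.

Lemma Pn_Ln x : Pn x -> ~ Ln x.
Proof. by rewrite /Pn /Ln /= => + x0; rewrite x0 ltxx. Qed.

(* On row vectors, [ball] is the ball of the sup norm. *)
Lemma ball_coord x e y : ball x e y -> forall i, `|x ord0 i - y ord0 i| < e.
Proof. by move=> [_ xy] i; exact: xy. Qed.

Lemma coord_ball x e y : 0 < e -> (forall i, `|x ord0 i - y ord0 i| < e) -> ball x e y.
Proof. by move=> e0 xy; split=> // i j; rewrite (ord1 i); exact: xy. Qed.

Lemma coord_le_norm x i : `|x ord0 i| <= `|x|.
Proof.
rewrite (_ : `|x| = mx_norm x) // mx_normrE; apply/bigmax_geP; right => /=.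
by exists (ord0, i).
Qed.

Lemma lastc_ball x e y : ball x e y -> `|lastc x - lastc y| < e.
Proof. by rewrite !lastcE => /ball_coord. Qed.

Lemma eball_sub_ball x e : eball x e `<=` ball x e.
Proof.
rewrite /eball /edist => y /= yx; have e0 := le_lt_trans (sqrtr_ge0 _) yx.
apply: coord_ball => // i; rewrite distrC; apply: le_lt_trans yx.
rewrite -sqrtr_sqr ler_sqrt; last by apply: sumr_ge0 => j _; exact: sqr_ge0.
by rewrite (bigD1 i) //= lerDl; apply: sumr_ge0 => j _; exact: sqr_ge0.
Qed.

Lemma lastc_eball x e y : eball x e y -> `|lastc x - lastc y| < e.
Proof. by move/eball_sub_ball/lastc_ball. Qed.

Lemma ball_sub_eball x e : 0 < e -> ball x (e / n%:R) `<=` eball x e.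
Proof.
move=> e0 y /ball_coord xy; rewrite /eball /edist /=.
rewrite -[e]gtr0_norm // -sqrtr_sqr ltr_sqrt ?exprn_gt0 //.
apply: (@lt_le_trans _ _ (\sum_(i < n) (e / n%:R) ^+ 2)).
  apply: ltr_sum; first by apply/hasP; exists ilast; rewrite ?mem_index_enum.
  by move=> i _; move: (xy i); rewrite ltr_norml => /andP[]; nra.
have [N0 N1] : 0 < n%:R :> R /\ 1 <= n%:R :> R by rewrite ltr0n ler1n.
have -> : \sum_(i < n) (e / n%:R) ^+ 2 = e ^+ 2 / n%:R.
  by rewrite sumr_const card_ord -mulr_natr; field; rewrite gt_eqF.
by rewrite ler_pdivrMr //; have := sqr_ge0 e; nra.
Qed.

Lemma lift_pt_eball t e z : Ln t -> eball (lift_pt t e) e z ->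
  [/\ 0 < lastc z, lastc z < e *+ 2 & ball t (e *+ 2) z].
Proof.
move=> t0 /eball_sub_ball tez.
have : `|e - lastc z| < e by rewrite -{1}(lastc_lift_pt t e); exact: lastc_ball.
rewrite ltr_distlC mulr2n => /andP[z0 ze].
have [e0 lz0] : 0 < e /\ 0 < lastc z by split; lra.
split => //; apply: coord_ball => [|i]; first lra.
have := ball_coord tez i; rewrite mxE; case: eqP => [i_last _|_ tz]; last first.
  by apply: lt_le_trans tz _; rewrite lerDl ltW.
have -> : i = ilast by exact: val_inj.
by rewrite -!lastcE t0 sub0r normrN gtr0_norm.
Qed.

Lemma open_Pn : open Pn.
Proof.
rewrite openE => x Px; apply/nbhs_ballP; exists (lastc x) => // y.
by move/lastc_ball; rewrite /Pn /= ltr_distlC => /andP[]; lra.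
Qed.

Section TauOpen.
Variable B : set 'rV[R]_n.

Lemma tau_base_Pn x e : Pn x -> 0 < e ->
  exists2 W, tau_base B x W & W `<=` eball x e `&` Pn.
Proof.
move=> Px e0; have x0 : 0 < lastc x := Px.
pose d := Num.min e (lastc x / 2).
have [de dx] : d <= e /\ d <= lastc x / 2 by rewrite !ge_min !lexx orbT.
have d0 : 0 < d by rewrite lt_min e0 divr_gt0.
exists (eball x d); first by left; split => //; exists d; split => //; rewrite d0 /=; lra.
move=> y xdy; split; first exact: lt_le_trans xdy de.
by move: (lastc_eball xdy); rewrite /Pn /= ltr_distlC => /andP[]; lra.
Qed.

Lemma open_tau_open U : open U -> tau_open B (U `&` Xn).
Proof.
rewrite openE => oU; split=> [x []//|x [Ux Xx]].
have /nbhs_ballP[d d0 xdU] := oU x Ux.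
have sub_U e : e <= d -> eball x e `&` Xn `<=` U `&` Xn.
  by move=> ed y [/eball_sub_ball/(le_ball ed)/xdU].
have [Bx|nBx] := pselect (B x).
  by exists (eball x d `&` Xn); [right; left; split => //; exists d|exact: sub_U].
case: Xx => [Px|Lx].
  have [W xW Wsub] := tau_base_Pn Px d0; exists W => // y /Wsub[xdy Py].
  by apply: (sub_U d) => //; split => //; left.
exists (tball x (d / 2)); first by right; right; split => //; exists (d / 2); rewrite divr_gt0.
move=> z [->|/(lift_pt_eball Lx)[z0 _ xz]]; first by split => //; right.
by rewrite mulr2n -splitr in xz; split; [exact: xdU|left].
Qed.

Lemma tau_openU U1 U2 : tau_open B U1 -> tau_open B U2 -> tau_open B (U1 `|` U2).
Proof.
move=> [U1X oU1] [U2X oU2]; split=> [x [/U1X|/U2X]//|x [/oU1|/oU2]] [W xW WU].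
  by exists W => // y /WU; left.
by exists W => // y /WU; right.
Qed.

Lemma tau_open_strip S r : 0 < r -> S `<=` Ln `\` B ->
  tau_open B (S `|` [set y | Pn y /\ lastc y < r]).
Proof.
move=> r0 SLB; split=> [x [/SLB[Lx _]|[Px _]]|x [Sx|[Px xr]]]; [by right|by left| |].
  have [Lx nBx] := SLB x Sx.
  exists (tball x (r / 2)); first by right; right; split => //; exists (r / 2); rewrite divr_gt0.
  move=> z [->|/(lift_pt_eball Lx)[z0 zr _]]; [by left|right; split => //].
  by rewrite mulr2n -splitr in zr.
have [W xW Wsub] : exists2 W, tau_base B x W & W `<=` eball x (r - lastc x) `&` Pn.
  by apply: tau_base_Pn; rewrite ?subr_gt0.
exists W => // y /Wsub[xry Py]; right; split => //.
by move: (lastc_eball xry); rewrite ltr_distlC => /andP[]; lra.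
Qed.

Lemma tau_open_add_point S s : S `<=` Ln `\` B -> tau_open B (Xn `\` S) -> S s ->
  tau_open B ((Xn `\` S) `|` [set s]).
Proof.
move=> SLB [XSX oXS] Ss; have [Ls nBs] := SLB s Ss.
split=> [x [/XSX//|-> /=]|x [/oXS[W xW WXS]|->]]; first by right.
  by exists W => // y /WXS; left.
exists (tball s 1); first by right; right; split => //; exists 1.
move=> z [->|/(lift_pt_eball Ls)[z0 _ _]]; [by right|left; split; first by left].
by move=> /SLB[/(Pn_Ln z0)].
Qed.

Lemma not_tau_Lindelof S : S `<=` Ln `\` B -> closed S -> ~ countable S -> ~ tau_Lindelof B.
Proof.
move=> SLB cS uS BLind.
have oXS : tau_open B (Xn `\` S).
  by rewrite setDE setIC; apply: open_tau_open; exact: closed_openC.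
have [s0 Ss0] : S !=set0.
  by apply/set0P/eqP => S0; apply: uS; rewrite S0; exact: countable0.
pose C := [set (Xn `\` S) `|` [set s] | s in S].
have [D [DC cD] XD] : exists2 D, D `<=` C /\ countable D & Xn `<=` \bigcup_(U in D) U.
  apply: BLind => [_ [s Ss <-]|x Xx]; first exact: tau_open_add_point.
  have [Sx|nSx] := pselect (S x).
    by exists ((Xn `\` S) `|` [set x]); [exists x|right].
  by exists ((Xn `\` S) `|` [set s0]); [exists s0|left].
apply: uS; apply: (@sub_countable _ _ _ (\bigcup_(U in D) (U `&` S))).
  apply: subset_card_le => x Sx.
  by have [U DU Ux] := XD x (or_intror (SLB x Sx).1); exists U.
apply: bigcup_countable => // _ /DC[s _ <-].
apply: (sub_countable (subset_card_le _) (countable1 s)).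
by move=> x [[[_ /[swap]]|->]].
Qed.

Hypothesis BL : B `<=` Ln.

Lemma tau_closed_closure F x : tau_closed B F -> Pn x \/ B x -> closure F x -> F x.
Proof.
move=> [FX [_ oXF]] PBx clFx; apply: contrapT => nFx.
have Xx : Xn x by case: PBx => [|/BL]; [left|right].
have [W xW WXF] := oXF x (conj Xx nFx).
have [e e0 xeW] : exists2 e, 0 < e & eball x e `&` Xn `<=` W.
  case: xW => [[_ [e [/andP[e0 _] ->]]]|[[_ [e [e0 ->]]]|[[Lx nBx] _]]].
  - by exists e => // y [].
  - by exists e.
  - by case: PBx => // /Pn_Ln.
have [y [Fy xy]] : F `&` ball x (e / n%:R) !=set0.
  move: clFx; rewrite closureEnbhs; apply => //.
  by apply: nbhsx_ballx; rewrite divr_gt0 ?ltr0n.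
by have /WXF[] := xeW y (conj (ball_sub_eball e0 xy) (FX y Fy)).
Qed.

End TauOpen.

Lemma tau_perfect_Gdelta W : Gdelta W -> tau_perfect (Ln `&` W).
Proof.
move=> [Wk oWk ->{W}] F cF; set B := Ln `&` _.
pose G k := (thicken F k `&` (Pn `|` Wk k) `&` Xn) `|`
            ((F `&` (Ln `\` B)) `|` [set y | Pn y /\ lastc y < k.+1%:R^-1]).
exists G; split=> [k|].
  apply: tau_openU; last by apply: tau_open_strip; [rewrite invr_gt0|move=> y []].
  apply: open_tau_open; apply: openI; first exact: open_thicken.
  by apply: openU; [exact: open_Pn|exact: oWk].
apply/seteqP; split=> [x Fx k _|x Gx].
  have [Bx|nBx] := pselect (B x).
    by left; split => //; [split; [exact: sub_thicken|right; exact: Bx.2]|exact: cF.1].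
  case: (cF.1 x Fx) => [Px|Lx]; last by right; left.
  by left; split => //; [split; [exact: sub_thicken|left]|left].
apply: contrapT => nFx; have cl := tau_closed_closure (@subIsetl _ _ _) cF.
have Xx : Xn x by case: (Gx 0%N I) => [[_ //]|[[/cF.1 //]|[Px _]]]; left.
case: Xx => [Px|Lx]; apply: (nFx).
  apply: cl (or_introl Px) _; apply: closure_thicken.
  apply: filterS (near_infty_natSinv_lt (PosNum Px)) => k /= kx.
  case: (Gx k I) => [[[] //]|[[/nFx //]|[_]]].
  by move/lt_trans/(_ kx); rewrite ltxx.
have GL k : thicken F k x /\ Wk k x.
  by case: (Gx k I) => [[[? [/Pn_Ln//|]]]|[[/nFx]|[/Pn_Ln]]].
apply: cl; first by right; split => // k _; exact: (GL k).2.
by apply: closure_thicken; apply: nearW => k; exact: (GL k).1.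
Qed.

Lemma LnD_uncountable_closed A : (1 < n)%N -> A `<=` Ln -> compact A -> ~ countable A ->
  exists2 S, S `<=` Ln `\` A & closed S /\ ~ countable S.
Proof.
move=> n_gt1 AL cA uA.
have [M [_ AM]] := compact_bounded cA.
have AM1 a : A a -> `|a| <= `|M| + 1.
  by apply: AM; rewrite (le_lt_trans (ler_norm M)) ?ltrDl.
pose v : 'rV[R]_n := lift_pt (const_mx ((`|M| + 1) *+ 2 + 1)) 0.
have Mv : (`|M| + 1) *+ 2 < `|v|.
  apply: lt_le_trans (coord_le_norm v (Ordinal n_gt0)).
  have n1 : (0 == n.-1)%N = false.
    by apply/eqP => n1; move: n_gt1; rewrite -(prednK n_gt0) -n1.
  by rewrite !mxE /= n1 ltr_normr ltrDl ltr01.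
exists [set a + v | a in A]; last split.
- move=> _ [a Aa <-]; split.
    by rewrite /Ln /= lastcD lastc_lift_pt addr0; exact: AL.
  move=> Aav; have /seteqP[/(_ (a + v)) /= + _] := translate_disjoint AM1 Mv.
  by apply; split => //; exists a.
- apply: compact_closed; first exact: norm_hausdorff.
  apply: continuous_compact cA; apply: continuous_subspaceT => x /=.
  exact: (cvgD cvg_id (cvg_cst v)).
- move=> cvA; apply: uA; apply: sub_countable cvA.
  have := @inj_card_eq _ _ A (+%R^~ v) (in2W (addIr v)).
  by rewrite card_eq_sym => /card_eqPle[].
Qed.

End TauTopology.

Theorem mainTheorem17 (R : realType) (n : nat) (hn : (2 <= n)%N)
    (A : set 'rV[R]_n) (hAL : A `<=` (@Ln R n)) (hAc : compact A)
    (hAu : ~ countable A) :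
  (tau_perfect A /\ ~ tau_Lindelof A) /\
  (tau_perfect ((@Ln R n) `\` A) /\ ~ tau_Lindelof ((@Ln R n) `\` A)).
Proof.
have n_gt0 : (0 < n)%N := ltnW hn.
have cA : closed A := compact_closed (@norm_hausdorff _ _) hAc.
split; split.
- rewrite -(setIidr hAL); apply: tau_perfect_Gdelta => //; exact: closed_Gdelta.
- have [S SLA [cS uS]] := LnD_uncountable_closed n_gt0 hn hAL hAc hAu.
  exact: not_tau_Lindelof SLA cS uS.
- by rewrite setDE; apply: tau_perfect_Gdelta => //; apply: open_Gdelta; exact: closed_openC.
- apply: (not_tau_Lindelof n_gt0 (S := A)) => // x Ax.
  by split; [exact: hAL|case].
Qed.
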